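(* Let $G$ be a graph with a linear order $<$ on $V(G)$ satisfying the X-property, and let $s<t$ be vertices with $\operatorname{dist}(s,t)<\infty$. Then for every integer $k\ge 1$, the closed neighborhood $N[\alpha_s(k)]$ contains $\alpha_s(k-1)$ or $\beta_s(k-1)$.
   Context: The X-property: for all vertices $p<q<r<s$, if $\{p,r\}\in E(G)$ and $\{q,s\}\in E(G)$ then $\{p,s\}\in E(G)$. $N[v]$ is the closed neighborhood of $v$. For an integer $k\ge0$, $\alpha_s(k)$ (resp. $\beta_s(k)$) is the leftmost (resp. rightmost) vertex, w.r.t. $<$, that can be reached from $s$ by a path of length at most $k$ all of whose vertices $v$ satisfy $v\le t$. (In particular $\alpha_s(0)=\beta_s(0)=s$.) *)

From mathcomp Require Import all_boot all_order.
Set Implicit Arguments. Unset Strict Implicit. Unset Printing Implicit Defensive.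
Import Order.TTheory.
Local Open Scope order_scope.

Definition simple_graph (T : finType) (e : rel T) : Prop :=
  symmetric e /\ irreflexive e.

Definition X_property d (T : finOrderType d) (e : rel T) : Prop :=
  forall p q r s : T, p < q -> q < r -> r < s -> e p r -> e q s -> e p s.

Definition closed_nbhd (T : finType) (e : rel T) (v : T) : {set T} :=
  [set u | (u == v) || e v u].

(* Vertices reachable from s by a path (walk) of length at most k all of
   whose vertices v satisfy v <= t. *)
Definition reach d (T : finOrderType d) (e : rel T) (s t : T) (k : nat) : {set T} :=
  [set v | [exists p : (k.+1).-tuple T,
     [exists m : 'I_k.+1,
       [&& nth s p 0 == s,
           nth s p m == v,
           [forall i : 'I_k, (i < m)%N ==> e (nth s p i) (nth s p i.+1)] &
           [forall i : 'I_k.+1, (i <= m)%N ==> (nth s p i <= t)]]]]].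

(* alpha_s(k): leftmost such vertex (default s, which is reachable when s <= t). *)
Definition alpha d (T : finOrderType d) (e : rel T) (s t : T) (k : nat) : T :=
  \big[Order.min/s]_(v in reach e s t k) v.

Definition beta d (T : finOrderType d) (e : rel T) (s t : T) (k : nat) : T :=
  \big[Order.max/s]_(v in reach e s t k) v.

(* Let a = alpha_s(k).  If a is already reachable in k-1 steps, then
   alpha_s(k-1) = a.  Otherwise a is first reached at step k from a neighbour
   w reachable in k-1 steps; then every vertex reachable in k-1 steps lies to
   the right of a, and no vertex reachable in k-2 steps is adjacent to a.  By
   the X-property, an edge between two vertices to the right of a that are not
   adjacent to a cannot jump over w, so every vertex reachable in k-1 steps and
   not adjacent to a lies on the same side of w as s.  The extreme vertex
   alpha_s(k-1) (when w < s) or beta_s(k-1) (when s < w) lies on the other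
   side of w, or is w itself, hence is adjacent to a. *)

From mathcomp Require Import all_boot all_order.
Set Implicit Arguments. Unset Strict Implicit. Unset Printing Implicit Defensive.
Import Order.TTheory.
Local Open Scope order_scope.

Section Reach.
Variables (d : Order.disp_t) (T : finOrderType d) (e : rel T) (s t : T).

Lemma reachP k v : reflect
  (exists f : nat -> T, exists m, [/\ (m <= k)%N, f 0%N = s, f m = v,
    forall i, (i < m)%N -> e (f i) (f i.+1) & forall i, (i <= m)%N -> f i <= t])
  (v \in reach e s t k).
Proof.
apply: (iffP idP).
- rewrite inE => /existsP [p /existsP [m /and4P [/eqP p0 /eqP pm p_e p_t]]].
  have m_le_k : (m <= k)%N by rewrite -ltnS.
  exists (nth s p), m; split => // i i_m.
  + have i_k : (i < k)%N := leq_trans i_m m_le_k.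
    by move/forallP/(_ (Ordinal i_k))/implyP: p_e; apply.
  + have i_k : (i < k.+1)%N := leq_ltn_trans i_m (ltn_ord m).
    by move/forallP/(_ (Ordinal i_k))/implyP: p_t; apply.
- case=> f [m [m_le_k f0 fm f_e f_t]].
  pose p : k.+1.-tuple T := Tuple (introT eqP (size_mkseq f k.+1)).
  have nth_p j : (j < k.+1)%N -> nth s p j = f j by move=> j_k; rewrite nth_mkseq.
  rewrite inE; apply/existsP; exists p.
  apply/existsP; exists (Ordinal (m_le_k : (m < k.+1)%N)).
  apply/and4P; split.
  + by rewrite nth_p // f0.
  + by rewrite nth_p // fm.
  + apply/forallP => i; apply/implyP => i_m.
    by rewrite !nth_p ?ltnS ?(ltnW (ltn_ord i)) //; apply: f_e.
  + by apply/forallP => i; apply/implyP => i_m; rewrite nth_p //; apply: f_t.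
Qed.

Lemma reach_le k v : v \in reach e s t k -> v <= t.
Proof. by case/reachP=> f [m [_ _ <- _ f_t]]; apply: f_t. Qed.

Lemma reach0 v : v \in reach e s t 0 -> v = s.
Proof. by case/reachP=> f [m [m0 f0 <- _ _]]; move: m0; rewrite leqn0 => /eqP ->. Qed.

Lemma reach_start k : s <= t -> s \in reach e s t k.
Proof. by move=> s_t; apply/reachP; exists (fun _ => s), 0%N. Qed.

Lemma reach_sub j k : (j <= k)%N -> {subset reach e s t j <= reach e s t k}.
Proof.
move=> j_k v /reachP [f [m [m_j f0 fm f_e f_t]]].
by apply/reachP; exists f, m; split => //; apply: leq_trans j_k.
Qed.

Lemma reach_step k u v :
  u \in reach e s t k -> e u v -> v <= t -> v \in reach e s t k.+1.
Proof.
case/reachP=> f [m [m_k f0 fm f_e f_t]] e_uv v_t; apply/reachP.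
exists (fun i => if (i <= m)%N then f i else v), m.+1; split => //.
- by rewrite ltnn.
- move=> i; rewrite ltnS => i_m; rewrite i_m.
  case: ltngtP i_m => // [i_lt_m | ->] _; first exact: f_e.
  by rewrite fm.
- by move=> i _; case: ifP => // i_m; apply: f_t.
Qed.

Lemma reach_step_inv k v : v \in reach e s t k.+1 ->
  v \in reach e s t k \/ exists2 u, u \in reach e s t k & e u v.
Proof.
case/reachP=> f [m [m_k f0 fm f_e f_t]].
have [m_lt_k | k_lt_m] := ltnP m k.+1; first by left; apply/reachP; exists f, m.
have m_eq : m = k.+1 by apply/eqP; rewrite eqn_leq m_k.
subst m; right; exists (f k); last by rewrite -fm; apply: f_e.
apply/reachP; exists f, k; split => // i i_k; first exact/f_e/ltnW.
exact/f_t/leqW.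
Qed.

Lemma alpha_in k : s <= t -> alpha e s t k \in reach e s t k.
Proof.
move=> s_t; apply: (big_ind (fun x => x \in reach e s t k)) => //.
  exact: reach_start.
by move=> x y x_in y_in; rewrite minEle; case: ifP.
Qed.

Lemma beta_in k : s <= t -> beta e s t k \in reach e s t k.
Proof.
move=> s_t; apply: (big_ind (fun x => x \in reach e s t k)) => //.
  exact: reach_start.
by move=> x y x_in y_in; rewrite maxEle; case: ifP.
Qed.

Lemma alpha_le k v : v \in reach e s t k -> alpha e s t k <= v.
Proof. exact: bigmin_le_cond. Qed.

Lemma le_beta k v : v \in reach e s t k -> v <= beta e s t k.
Proof. exact: le_bigmax_cond. Qed.

Lemma alpha_succ_stable k : s <= t ->
  alpha e s t k.+1 \in reach e s t k -> alpha e s t k = alpha e s t k.+1.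
Proof.
move=> s_t a_in; apply/le_anti; rewrite alpha_le //=.
exact/alpha_le/(reach_sub (leqnSn k))/alpha_in.
Qed.

End Reach.

Section XProperty.
Variables (d : Order.disp_t) (T : finOrderType d) (e : rel T).
Hypotheses (e_sym : symmetric e) (e_X : X_property e).

Lemma X_same_side a w u y : e a w -> e u y -> a < u -> a < y ->
  ~~ e a u -> ~~ e a y -> (u < w) = (y < w).
Proof.
move=> e_aw e_uy a_u a_y n_au n_ay.
have u_w : u != w by apply: contraNneq n_au => ->.
have y_w : y != w by apply: contraNneq n_ay => ->.
case: ltgtP u_w => // [u_lt_w | w_lt_u] _.
- case: ltgtP y_w => // w_lt_y _.
  by rewrite (e_X a_u u_lt_w w_lt_y e_aw e_uy) in n_ay.
- case: ltgtP y_w => // y_lt_w _.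
  by rewrite e_sym in e_uy; rewrite (e_X a_y y_lt_w w_lt_u e_aw e_uy) in n_au.
Qed.

Variables (s t a w : T) (m : nat).
Hypotheses (e_aw : e a w)
  (a_far : {in reach e s t m, forall u, ~~ e a u})
  (a_min : {in reach e s t m.+1, forall y, a < y}).

Lemma reach_same_side j y : (j <= m.+1)%N -> y \in reach e s t j -> ~~ e a y ->
  (y < w) = (s < w).
Proof.
elim: j y => [|j IHj] y j_m y_in n_ay; first by rewrite (reach0 y_in).
case: (reach_step_inv y_in) => [y_old | [u u_in e_uy]].
  exact: IHj y (ltnW j_m) y_old n_ay.
have n_au : ~~ e a u := a_far (reach_sub (j_m : (j <= m)%N) u_in).
rewrite -(IHj u (ltnW j_m) u_in n_au) (X_same_side e_aw e_uy _ _ n_au n_ay) //.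
  exact/a_min/(reach_sub (ltnW j_m)).
exact/a_min/(reach_sub j_m).
Qed.

End XProperty.

Theorem lemma10 (d : Order.disp_t) (T : finOrderType d) (e : rel T)
  (Hg : simple_graph e) (HX : X_property e) (s t : T)
  (Hst : s < t) (Hdist : connect e s t) (k : nat) (Hk : (1 <= k)%N) :
  (alpha e s t k.-1 \in closed_nbhd e (alpha e s t k)) \/
  (beta e s t k.-1 \in closed_nbhd e (alpha e s t k)).
Proof.
case: Hg => e_sym _; have s_t := ltW Hst.
case: k Hk => // n _ /=; set a := alpha e s t n.+1.
have a_in : a \in reach e s t n.+1 := alpha_in e n.+1 s_t.
have [a_old | a_new] := boolP (a \in reach e s t n).
  by left; rewrite (alpha_succ_stable s_t a_old) inE eqxx.
have [w w_in e_wa] : exists2 w, w \in reach e s t n & e w a.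
  by case: (reach_step_inv a_in) => // a_old; rewrite a_old in a_new.
have e_aw : e a w by rewrite e_sym.
have a_min : {in reach e s t n, forall y, a < y}.
  move=> y y_in; rewrite lt_neqAle alpha_le ?(reach_sub (leqnSn n) y_in) ?andbT //.
  by apply: contraNneq a_new => ->.
case: n => [|m] in a a_in a_new w_in e_wa e_aw a_min *.
  by left; rewrite (reach0 (alpha_in e 0 s_t)) -(reach0 w_in) inE e_aw orbT.
have a_far : {in reach e s t m, forall u, ~~ e a u}.
  move=> u u_in; apply: contra a_new => e_au.
  by apply: reach_step u_in _ (reach_le a_in); rewrite e_sym.
have side := reach_same_side e_sym HX e_aw a_far a_min (leqnn m.+1).
rewrite !inE; case: (ltgtP s w) => [s_lt_w | w_lt_s | s_eq_w].
- right; apply/orP; right; apply: contraT => n_ab.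
  by move: (side _ (beta_in e m.+1 s_t) n_ab); rewrite s_lt_w ltNge le_beta.
- left; apply/orP; right; apply: contraT => n_aa.
  have alpha_ne_w : alpha e s t m.+1 != w by apply: contraNneq n_aa => ->.
  move: (side _ (alpha_in e m.+1 s_t) n_aa).
  by rewrite (lt_gtF w_lt_s) lt_neqAle alpha_ne_w alpha_le.
- by move: (a_far _ (reach_start e m s_t)); rewrite s_eq_w e_aw.
Qed.
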